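(* Let $\Sigma$ be a finite set, $I\subseteq\Sigma\times\Sigma$ a symmetric irreflexive relation, $M=M(\Sigma,I)$, and $n\ge 1$. If the graph $\Gamma(M)$ contains no complete subgraph with more than $n$ vertices (equivalently, there are no $n+1$ distinct pairwise commuting letters in $\Sigma$), then the homological dimension of $M$ is at most $n$, i.e. the trivial module $\mathbb{Z}$ has a projective (indeed free) resolution over $\mathbb{Z}M$ of length at most $n$.
   Context: For a finite alphabet $\Sigma$ and a symmetric irreflexive relation $I\subseteq \Sigma\times\Sigma$, the free partially commutative monoid $M(\Sigma,I)$ is the monoid with presentation $\langle \Sigma \mid ab=ba \text{ for all } (a,b)\in I\rangle$. Its graph $\Gamma(M)$ is the simple undirected graph with vertex set $\Sigma$ in which $a,b$ are adjacent iff $(a,b)\in I$. The homological dimension of a monoid $M$ is the projective dimension of the trivial $\mathbb{Z}M$-module $\mathbb{Z}$ (with $n\cdot m=n$ for $m\in M$). *)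

From HB Require Import structures.
From mathcomp Require Import all_boot all_order all_algebra.
Set Implicit Arguments. Unset Strict Implicit. Unset Printing Implicit Defensive.
Import GRing.Theory.
Local Open Scope ring_scope.

(* The free partially commutative monoid M(Sigma, I) = seq Sigma / trace_eq I:
   the congruence generated by  a b = b a  for (a,b) in I. *)
Inductive trace_eq (S : Type) (I : rel S) : seq S -> seq S -> Prop :=
| te_refl u : trace_eq I u u
| te_sym u v : trace_eq I u v -> trace_eq I v u
| te_trans u v w : trace_eq I u v -> trace_eq I v w -> trace_eq I u w
| te_swap u v a b : I a b ->
    trace_eq I (u ++ a :: b :: v) (u ++ b :: a :: v).

(* A (left) ZM-module structure on an abelian group V: an action of the monoid
   M = M(S,I) (given on representative words, compatible with trace_eq) by
   additive endomorphisms.  This is exactly a module over the monoid ring ZM. *)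
Definition is_module (S : Type) (I : rel S) (V : zmodType)
  (act : seq S -> V -> V) : Prop :=
  [/\ forall w (x y : V), act w (x - y) = act w x - act w y,
      forall x, act [::] x = x,
      forall u v x, act (u ++ v) x = act u (act v x)
    & forall u v x, trace_eq I u v -> act u x = act v x].

Definition is_hom (S : Type) (V W : zmodType)
  (actV : seq S -> V -> V) (actW : seq S -> W -> W) (f : V -> W) : Prop :=
  (forall x y, f (x - y) = f x - f y) /\ (forall w x, f (actV w x) = actW w (f x)).

Definition triv_act (S : Type) (w : seq S) (x : int) : int := x.

Definition projective (S : Type) (I : rel S) (P : zmodType)
  (actP : seq S -> P -> P) : Prop :=
  forall (A B : zmodType) (actA : seq S -> A -> A) (actB : seq S -> B -> B)
         (g : A -> B) (f : P -> B),
    is_module I actA -> is_module I actB ->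
    is_hom actA actB g -> (forall b, exists a, g a = b) ->
    is_hom actP actB f ->
    exists h : P -> A, is_hom actP actA h /\ (forall x, g (h x) = f x).

(* Homological dimension of M(S,I) is at most n: the trivial module Z has a
   projective resolution  0 -> P_n -> ... -> P_1 -> P_0 -> Z -> 0
   (d i : P_(i+1) -> P_i, eps : P_0 -> Z). *)
Definition hom_dim_le (S : Type) (I : rel S) (n : nat) : Prop :=
  exists (P : nat -> zmodType) (act : forall i, seq S -> P i -> P i)
         (d : forall i, P i.+1 -> P i) (eps : P 0%N -> int),
    [/\ (forall i, (i <= n)%N -> is_module I (act i) /\ projective I (act i)),
        (forall i, (i < n)%N -> is_hom (act i.+1) (act i) (d i)),
        (is_hom (act 0%N) (@triv_act S) eps /\ (forall z, exists x, eps x = z)),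
        (((0 < n)%N -> forall x, eps x = 0 <-> exists y, d 0%N y = x) /\
         (forall i, (i.+1 < n)%N -> forall x : P i.+1,
            d i x = 0 <-> exists y, d i.+1 y = x))
      & ((forall x : P 0%N, n = 0%N -> eps x = 0 -> x = 0) /\
         (forall i, i.+1 = n -> forall x : P i.+1, d i x = 0 -> x = 0))].

(* Let P_k be the free ZM-module on the k-cliques A of pairwise commuting letters,
   with d[A] = \sum_(a in A) +-(a[A :\ a] - [A :\ a]) and augmentation P_0 = ZM -> Z.
   This is a complex because the letters of a clique commute. For exactness, view the
   Z-basis element t[A] as the trace tA and pick a last letter m of it: if m is not in A
   then t = t'm and t[A] is a face of t'[m |: A], otherwise t[A] has the face tm[A :\ m].
   This matching lets one eliminate, from a cycle, all basis elements of maximal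
   weight |t| + |A| modulo boundaries, until the cycle vanishes. The clique bound n makes
   P_k = 0 for k > n, so the resolution has length n. *)

From HB Require Import structures.
From mathcomp Require Import all_boot all_order all_algebra.
From mathcomp Require Import boolp freeg zify.
Import GRing.Theory.
Set Implicit Arguments. Unset Strict Implicit. Unset Printing Implicit Defensive.

(** * Traces *)

Section Traces.
Variables (S : finType) (I : rel S).
Hypotheses (Isym : symmetric I) (Iirr : irreflexive I).

Definition trace_proj (x y : S) (u : seq S) := [seq c <- u | (c == x) || (c == y)].

(* Projection lemma: words are trace equivalent iff they agree on every non-commuting
   pair of letters ([teqP]). This gives a decidable equivalence to pick normal forms. *)
Definition teq (u v : seq S) : bool :=
  [forall x, forall y, ~~ I x y ==> (trace_proj x y u == trace_proj x y v)].

Lemma teq_projP u v :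
  reflect (forall x y, ~~ I x y -> trace_proj x y u = trace_proj x y v) (teq u v).
Proof.
apply: (iffP forallP) => [H x y nI | H x]; last by apply/forallP => y; apply/implyP => /H ->.
by have /forallP/(_ y)/implyP/(_ nI)/eqP := H x.
Qed.

Lemma teq_refl u : teq u u.
Proof. exact/teq_projP. Qed.

Lemma teq_sym u v : teq u v -> teq v u.
Proof. by move/teq_projP=> H; apply/teq_projP => x y /H ->. Qed.

Lemma teq_trans u v w : teq u v -> teq v w -> teq u w.
Proof. by move=> /teq_projP H1 /teq_projP H2; apply/teq_projP => x y nI; rewrite H1 ?H2. Qed.

Lemma teq_cat u u' v v' : teq u u' -> teq v v' -> teq (u ++ v) (u' ++ v').
Proof.
move=> /teq_projP H1 /teq_projP H2; apply/teq_projP => x y nI.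
by rewrite /trace_proj !filter_cat -!/(trace_proj _ _ _) H1 ?H2.
Qed.

Lemma teq_catl p u v : teq u v -> teq (p ++ u) (p ++ v).
Proof. exact: teq_cat (teq_refl p). Qed.

Lemma teq_catr p u v : teq u v -> teq (u ++ p) (v ++ p).
Proof. by move=> H; apply: teq_cat H (teq_refl p). Qed.

Lemma teq_rcons a u v : teq u v -> teq (rcons u a) (rcons v a).
Proof. by rewrite -!cats1; apply: teq_catr. Qed.

Lemma teq_consK a u v : teq (a :: u) (a :: v) -> teq u v.
Proof.
move/teq_projP=> H; apply/teq_projP => x y /H /=.
by case: ifP => // _ [].
Qed.

Lemma teq_rconsK a u v : teq (rcons u a) (rcons v a) -> teq u v.
Proof.
move/teq_projP=> H; apply/teq_projP => x y /H; rewrite /trace_proj !filter_rcons.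
by case: ifP => // _ /rcons_inj [].
Qed.

Lemma teq_count u v : teq u v -> forall x, count_mem x u = count_mem x v.
Proof.
move=> /teq_projP H x; have := H x x; rewrite Iirr => /(_ isT) E.
have diag w : trace_proj x x w = [seq c <- w | c == x] by apply: eq_filter => c; rewrite orbb.
by rewrite -!size_filter; move: E; rewrite !diag => ->.
Qed.

Lemma teq_size u v : teq u v -> size u = size v.
Proof. by move=> H; apply/perm_size/allP => x _; rewrite /= (teq_count H). Qed.

Lemma trace_eq_catl p u v : trace_eq I u v -> trace_eq I (p ++ u) (p ++ v).
Proof.
elim=> {u v} [u|u v _|u v w _ H1 _ H2|u v a b Iab].
- exact: te_refl.
- exact: te_sym.
- exact: te_trans H1 H2.
by rewrite !catA; apply: te_swap.
Qed.

Lemma trace_eq_move a v1 v2 : all (I a) v1 ->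
  trace_eq I (v1 ++ a :: v2) (a :: v1 ++ v2).
Proof.
elim: v1 => [|c v1 IH] /=; first by move=> _; apply: te_refl.
case/andP=> Iac /IH H; apply: te_trans (trace_eq_catl [:: c] H) _.
by apply: (@te_swap _ _ [::]); rewrite Isym.
Qed.

Lemma trace_eq_teq u v : trace_eq I u v -> teq u v.
Proof.
elim=> {u v} [u|u v _|u v w _ H1 _ H2|u v a b Iab].
- exact: teq_refl.
- exact: teq_sym.
- exact: teq_trans H1 H2.
apply/teq_projP => x y nI; rewrite /trace_proj !filter_cat /=.
case: (boolP ((a == x) || (a == y))) => ha; case: (boolP ((b == x) || (b == y))) => hb //.
exfalso; move: nI; case/orP: ha => /eqP ?; case/orP: hb => /eqP ?; subst.
- by rewrite Iirr in Iab.
- by rewrite Iab.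
- by rewrite Isym Iab.
- by rewrite Iirr in Iab.
Qed.

Lemma teq_trace_eq u v : teq u v -> trace_eq I u v.
Proof.
elim: u v => [|a u IH] v H.
  by case: v H (teq_size H) => // _ _; apply: te_refl.
have av : a \in v by rewrite -has_pred1 has_count -(teq_count H) /= eqxx.
have [v1 [v2 [av1 Ev]]] : exists v1 v2, a \notin v1 /\ v = v1 ++ a :: v2.
  exists (take (index a v) v), (drop (index a v).+1 v).
  split; first by rewrite in_take // ltnn.
  by rewrite -drop_index // cat_take_drop.
have Iv1 : all (I a) v1.
  apply/allP => c cv1; apply: contraT => nIac.
  have cP : c \in trace_proj a c v1 by rewrite mem_filter eqxx orbT.
  have aP : a \notin trace_proj a c v1 by rewrite mem_filter (negPf av1) andbF.
  move: (teq_projP _ _ H a c nIac).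
  rewrite Ev /trace_proj filter_cat /= eqxx /= -/(trace_proj a c v1).
  case: (trace_proj a c v1) cP aP => // d s _.
  by move=> /negP aP /= [ad _]; case: aP; rewrite ad mem_head.
rewrite Ev in H *; apply: te_trans _ (te_sym (trace_eq_move v2 Iv1)).
apply: (trace_eq_catl [:: a]); apply: IH; apply: (@teq_consK a).
by apply: teq_trans H _; apply: trace_eq_teq; apply: trace_eq_move.
Qed.

Lemma teqP u v : reflect (trace_eq I u v) (teq u v).
Proof. by apply: (iffP idP); [apply: teq_trace_eq | apply: trace_eq_teq]. Qed.

Lemma teq_swap t a b : I a b -> teq (rcons (rcons t a) b) (rcons (rcons t b) a).
Proof. by move=> Iab; rewrite -!cats1 -!catA; apply/teqP/(@te_swap _ _ t [::]). Qed.

Lemma teq_clique (s1 s2 : seq S) : uniq s1 -> uniq s2 -> s1 =i s2 ->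
  {in s1 &, forall p q, p != q -> I p q} -> teq s1 s2.
Proof.
move=> u1 u2 E C; apply/teq_projP => x y nI; apply/esym/perm_small_eq; last first.
  by apply: uniq_perm; rewrite ?filter_uniq // => c; rewrite !mem_filter E.
have us : uniq (trace_proj x y s1) by exact: filter_uniq.
case Es : (trace_proj x y s1) us => [|p [|q w]] //=.
rewrite inE => /andP[/norP[pq _] _].
have : p \in trace_proj x y s1 by rewrite Es inE eqxx.
have : q \in trace_proj x y s1 by rewrite Es !inE eqxx orbT.
rewrite !mem_filter => /andP[hq qs] /andP[hp ps]; have Ipq := C _ _ ps qs pq.
move: nI; case/orP: hp => /eqP ?; case/orP: hq => /eqP ?; subst.
- by rewrite eqxx in pq.
- by rewrite Ipq.
- by rewrite Isym Ipq.
- by rewrite eqxx in pq.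
Qed.

Definition nf (u : seq S) : seq S := xchoose (ex_intro (teq u) u (teq_refl u)).

Lemma teq_nf u : teq u (nf u).
Proof. exact: xchooseP. Qed.

Lemma eq_nf u v : teq u v -> nf u = nf v.
Proof.
move=> H; apply: eq_xchoose => w; apply/idP/idP => H2.
- exact: teq_trans (teq_sym H) H2.
- exact: teq_trans H H2.
Qed.

Lemma nf_teq u v : nf u = nf v -> teq u v.
Proof. by move=> E; apply: teq_trans (teq_nf u) _; rewrite E teq_sym ?teq_nf. Qed.

Lemma nf_idem u : nf (nf u) = nf u.
Proof. exact/esym/eq_nf/teq_nf. Qed.

Lemma size_nf u : size (nf u) = size u.
Proof. exact/esym/teq_size/teq_nf. Qed.

Lemma nf_nil : nf [::] = [::].
Proof. by apply/eqP; rewrite -size_eq0 size_nf. Qed.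

Definition is_last (u : seq S) (a : S) := exists t, teq u (rcons t a).

Definition last_letter (u : seq S) : option S := [pick a | `[< is_last u a >] ].

Lemma last_letter_None u : last_letter u = None -> u = [::].
Proof.
rewrite /last_letter; case: pickP => // H _; case/lastP: u H => // u a /(_ a).
by move/asboolP; case; exists u; apply: teq_refl.
Qed.

Lemma last_letter_Some u m : last_letter u = Some m -> is_last u m.
Proof. by rewrite /last_letter; case: pickP => // x /asboolP H [<-]. Qed.

Lemma is_last_teq u v a : teq u v -> is_last u a -> is_last v a.
Proof. by move=> H [t Ht]; exists t; apply: teq_trans (teq_sym H) Ht. Qed.

Lemma is_last_rcons t a : is_last (rcons t a) a.
Proof. by exists t; apply: teq_refl. Qed.

Lemma is_last_commute u a b : is_last u a -> is_last u b -> a != b -> I a b.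
Proof.
move=> [t1 H1] [t2 H2] ab; apply: contraT => /(teq_projP _ _ (teq_trans (teq_sym H1) H2)).
rewrite /trace_proj !filter_rcons !eqxx orbT /= => /(congr1 (last a)).
by rewrite !last_rcons => /eqP; rewrite (negPf ab).
Qed.

Lemma is_last_catl t s m : is_last (t ++ s) m -> m \notin s -> is_last t m.
Proof.
elim/last_ind: t s => [|t x IH] s [r H] ms.
  have := teq_count H m; rewrite /= -cats1 count_cat /= eqxx (count_memPn ms).
  by rewrite addn1.
have [->|xm] := eqVneq x m; first exact: is_last_rcons.
have Ixm : I x m.
  apply: contraT => /(teq_projP _ _ H).
  rewrite /trace_proj filter_cat !filter_rcons !eqxx orbT /= => /(congr1 (last x)).
  rewrite last_cat !last_rcons; set q := filter _ s.
  have -> : last x q = x.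
    have : all (pred1 x) q.
      apply/allP => c; rewrite mem_filter => /andP[/orP[//|/eqP cm] cs].
      by rewrite -cm cs in ms.
    by elim: q => //= c q IHq /andP[/eqP -> ].
  by move/eqP; rewrite (negPf xm).
have [t' Ht'] : is_last t m.
  apply: (IH (x :: s)); first by exists r; rewrite -cat_rcons.
  by rewrite in_cons negb_or eq_sym xm.
exists (rcons t' x); apply: teq_trans (teq_rcons x Ht') _.
by rewrite -!cats1 -!catA; apply/teqP/(@te_swap _ _ t' [::]); rewrite Isym.
Qed.


Definition clique (A : {set S}) := [forall a in A, forall b in A, (a != b) ==> I a b].

Lemma cliqueP (A : {set S}) : reflect {in A &, forall a b, a != b -> I a b} (clique A).
Proof.
apply: (iffP forall_inP) => [H a b aA bA | H a aA].
  by move/forall_inP/(_ b bA)/implyP: (H a aA).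
by apply/forall_inP => b bA; apply/implyP; apply: H.
Qed.

Lemma cliqueS (A B : {set S}) : B \subset A -> clique A -> clique B.
Proof. by move=> /subsetP sBA /cliqueP H; apply/cliqueP => a b /sBA aA /sBA; apply: H. Qed.

End Traces.

Local Open Scope ring_scope.

Section FreeAbelian.
Variable K : choiceType.

Lemma freeg_ext (V : zmodType) (F G : {freeg K / int} -> V) :
  {morph F : x y / x - y} -> {morph G : x y / x - y} ->
  (forall c, F << c >> = G << c >>) -> forall x, F x = G x.
Proof.
move=> addF addG H.
pose FA : {additive _ -> V} := HB.pack F (GRing.isZmodMorphism.Build _ _ F addF).
pose GA : {additive _ -> V} := HB.pack G (GRing.isZmodMorphism.Build _ _ G addG).
suff : FA =1 GA by [].
elim/freeg_ind_dom0 => [|k x D _ _ IH]; first by rewrite !raddf0.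
by rewrite !raddfD IH -[k]intz -freegU_mulz !raddfMz (H x : FA << x >> = GA << x >>).
Qed.

Lemma freeg_mul2_eq0 (X : {freeg K / int}) : X *+ 2 = 0 -> X = 0.
Proof.
move=> H; apply/eqP/freeg_eqP => z; have := congr1 (coeff z) H.
by rewrite coeffMn !coeff0; lia.
Qed.

Lemma coeff_additive (L : choiceType) (F : {additive {freeg K / int} -> {freeg L / int}}) z b :
  coeff b (F z) = \sum_(c <- dom z) coeff b (F << c >>) * coeff c z.
Proof.
rewrite -{1}(freeg_sumE z) !raddf_sum; apply: eq_bigr => c _.
have -> : << coeff c z *g c >> = << c >> *~ coeff c z by rewrite freegU_mulz intz.
by rewrite !raddfMz mulrzz.
Qed.

End FreeAbelian.

Lemma sum_antisym_mul2 (T : finType) (V : zmodType) (A : {set T}) (F : T -> T -> V) :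
  {in A &, forall a b, a != b -> F b a = - F a b} ->
  (\sum_(a in A) \sum_(b in A :\ a) F a b) *+ 2 = 0.
Proof.
move=> HF; set X := (\sum_(a in A) _); rewrite mulr2n.
pose G a b := if (a \in A) && (b \in A :\ a) then F a b else 0.
have EX : X = \sum_a \sum_b G a b.
  rewrite /X big_mkcond; apply: eq_bigr => a _; rewrite big_mkcond /=.
  case: ifP => aA; last by rewrite big1 // => b _; rewrite /G aA.
  by apply: eq_bigr => b _; rewrite /G aA.
have HG a b : G b a = - G a b.
  rewrite /G !in_setD1.
  case: (boolP (a \in A)) => aA; case: (boolP (b \in A)) => bA /=; rewrite ?andbF ?oppr0 //.
  by have [->|ab] := eqVneq a b; rewrite ?eqxx ?oppr0 //= HF.
suff {1}-> : X = - X by rewrite addNr.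
rewrite {1}EX exchange_big /= EX -sumrN; apply: eq_bigr => b _.
by rewrite -sumrN; apply: eq_bigr => a _; rewrite HG.
Qed.

(** * The Koszul complex *)

Section KoszulComplex.
Variables (S : finType) (I : rel S).
Hypotheses (Isym : symmetric I) (Iirr : irreflexive I).

Implicit Types (A : {set S}) (a b : S) (u w : seq S) (k : nat).

Local Notation teq := (teq I).
Local Notation nf := (nf I).
Local Notation clique := (clique I).

Definition trace := {u : seq S | nf u == u}.

Definition trace_of (u : seq S) : trace := exist _ (nf u) (introT eqP (nf_idem I u)).

Definition kclique k (A : {set S}) := clique A && (#|A| == k).

(* The cell (t, A) stands for the basis element t[A] of the free [ZM]-module [chain k]. *)
Definition cell k := {c : trace * {set S} | kclique k c.2}.

Definition chain k := {freeg (cell k) / int}.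

Definition cword k (c : cell k) : seq S := val (val c).1.
Definition cset k (c : cell k) : {set S} := (val c).2.

(* The basis element u[A] for an arbitrary word u, or 0 when A is not a [k]-clique. *)
Definition gcell k (u : seq S) (A : {set S}) : chain k :=
  if insub (trace_of u, A) is Some c then << c >> else 0.

Lemma cword_nf k (c : cell k) : nf (cword c) = cword c.
Proof. exact/eqP/(valP (val c).1). Qed.

Lemma cell_kclique k (c : cell k) : kclique k (cset c).
Proof. exact: valP c. Qed.

Lemma cell_clique k (c : cell k) : clique (cset c).
Proof. by case/andP: (cell_kclique c). Qed.

Lemma cell_card k (c : cell k) : #|cset c| = k.
Proof. by case/andP: (cell_kclique c) => _ /eqP. Qed.

Lemma cell_inj k (c c' : cell k) : cword c = cword c' -> cset c = cset c' -> c = c'.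
Proof.
move: c c' => [[[t p] A] h] [[[t' p'] A'] h']; rewrite /cword /cset /= => E1 E2.
by subst; apply: val_inj; congr pair; apply: val_inj.
Qed.

Lemma gcell_teq k u v A : teq u v -> gcell k u A = gcell k v A.
Proof.
move=> H; rewrite /gcell; congr (if insub (_, A) is Some c then _ else _).
by apply: val_inj; rewrite /= (eq_nf H).
Qed.

Lemma gcell_cell k (c : cell k) : gcell k (cword c) (cset c) = << c >>.
Proof.
rewrite /gcell; have -> : (trace_of (cword c), cset c) = val c.
  by case: c => [[t A] h]; congr pair; apply: val_inj; rewrite /= cword_nf.
by rewrite valK.
Qed.

Lemma gcell_eq0 k u A : ~~ kclique k A -> gcell k u A = 0.
Proof. by move=> H; rewrite /gcell insubN. Qed.

Lemma gcellP k u A : kclique k A ->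
  exists c : cell k, [/\ gcell k u A = << c >>, cword c = nf u & cset c = A].
Proof. by move=> H; rewrite /gcell insubT /=; eexists. Qed.

Lemma coeff_gcell k (c : cell k) u A : coeff c (gcell k u A) != 0 ->
  cword c = nf u /\ cset c = A.
Proof.
have [/(gcellP u)[c' [-> <- <-]] | /(gcell_eq0 u) ->] := boolP (kclique k A).
  by rewrite coeffU; have [->|] := eqVneq c' c; rewrite ?mulr0 ?eqxx.
by rewrite coeff0 eqxx.
Qed.

Lemma coeff_gcell_cell k (c : cell k) u : cword c = nf u -> coeff c (gcell k u (cset c)) = 1.
Proof. by move=> E; rewrite (gcell_teq _ _ (teq_nf I u)) -E gcell_cell coeffU eqxx mulr1. Qed.

Definition act k (w : seq S) : chain k -> chain k :=
  fglift (fun c : cell k => gcell k (w ++ cword c) (cset c)).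
Arguments act : clear implicits.

HB.instance Definition _ k (w : seq S) :=
  GRing.isZmodMorphism.Build (chain k) (chain k) (act k w) (lift_is_additive _).

Lemma act_cell k w (c : cell k) : act k w << c >> = gcell k (w ++ cword c) (cset c).
Proof. by rewrite /act liftU scale1r. Qed.

Lemma act_gcell k w u A : act k w (gcell k u A) = gcell k (w ++ u) A.
Proof.
have [/(gcellP u)[c [-> Ec <-]] | /(gcell_eq0 _) E] := boolP (kclique k A).
  by rewrite act_cell Ec; apply/gcell_teq/teq_catl/teq_sym/teq_nf.
by rewrite !E raddf0.
Qed.

Lemma act_module k : is_module I (act k).
Proof.
split.
- by move=> w; apply: raddfB.
- by apply: (freeg_ext (G := idfun) (raddfB _) (raddfB _)) => c /=; rewrite act_cell gcell_cell.
- move=> u v; apply: (freeg_ext (G := act k u \o act k v) (raddfB _) (raddfB _)) => c /=.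
  by rewrite !act_cell act_gcell catA.
- move=> u v x /(teqP Isym Iirr) H; apply: (freeg_ext (raddfB _) (raddfB _)) => c /=.
  by rewrite !act_cell; apply: gcell_teq; apply: teq_catr.
Qed.

(* [chain k] is the free [ZM]-module on the cells ([::], A): lift their images and extend. *)
Lemma act_projective k : projective I (act k).
Proof.
move=> A B actA actB g f [addA _ actAM actA_teq] _ [addg actg] gsurj [addf actf].
have [pr prK] := choice gsurj.
pose h := fglift (fun c : cell k => actA (cword c) (pr (f (gcell k [::] (cset c)))) : zmodule A).
have addh : GRing.zmod_morphism h by apply: lift_is_additive.
have hE c : h << c >> = actA (cword c) (pr (f (gcell k [::] (cset c)))).
  by rewrite /h liftU scale1r.
exists h; split; first split.
- exact: addh.
- move=> w; apply: freeg_ext => [x y|x y|c]; first by rewrite !raddfB addh.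
  + by rewrite addh addA.
  rewrite act_cell; have [c' [-> Ec' Ac']] := gcellP (w ++ cword c) (cell_kclique c).
  rewrite !hE Ec' Ac' -actAM; apply: actA_teq; apply/(teqP Isym Iirr).
  exact/teq_sym/teq_nf.
- apply: freeg_ext => [x y|x y|c]; first by rewrite addh addg.
  + exact: addf.
  by rewrite hE actg prK -actf act_gcell cats0 gcell_cell.
Qed.

Lemma kcliqueD1 k A a : kclique k.+1 A -> a \in A -> kclique k (A :\ a).
Proof.
case/andP=> cA /eqP sA aA; rewrite /kclique (cliqueS (subsetDl A [set a]) cA) /=.
by move: (cardsD1 a A); rewrite aA sA add1n => -[<-].
Qed.

Lemma kclique0 : kclique 0 set0.
Proof. by rewrite /kclique cards0 andbT; apply/cliqueP => a b; rewrite inE. Qed.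

Definition rank_below (A : {set S}) (a : S) := #|[set b in A | (enum_rank b < enum_rank a)%N]|.

Definition ksign (A : {set S}) (a : S) : int := (-1) ^+ rank_below A a.

Lemma ksign_sqr A a : ksign A a * ksign A a = 1.
Proof. by rewrite /ksign -exprD -signr_odd oddD addbb. Qed.

Lemma ksign_neq0 A a : ksign A a != 0.
Proof. by rewrite /ksign signr_eq0. Qed.

Lemma ksign_swap A a b : a \in A -> b \in A -> a != b ->
  ksign A b * ksign (A :\ b) a = - (ksign A a * ksign (A :\ a) b).
Proof.
wlog lt_ba : a b / (enum_rank b < enum_rank a)%N.
  move=> H aA bA ab; have [lt|lt|eq_ab] := ltngtP (enum_rank b) (enum_rank a).
  - exact: H.
  - by rewrite (H b a) // ?opprK // eq_sym.
  - by move/val_inj/enum_rank_inj: eq_ab ab => ->; rewrite eqxx.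
move=> aA bA _; rewrite /ksign.
have -> : rank_below A a = (rank_below (A :\ b) a).+1.
  rewrite /rank_below (cardsD1 b) inE bA lt_ba add1n; congr _.+1.
  by apply: eq_card => x; rewrite !inE andbA.
have -> : rank_below (A :\ a) b = rank_below A b.
  apply: eq_card => x; rewrite !inE; have [->|] //= := eqVneq x a.
  by rewrite ltnNge (ltnW lt_ba) andbF.
by rewrite exprS mulN1r mulNr opprK mulrC.
Qed.

Definition face k (u : seq S) (A : {set S}) (a : S) : chain k :=
  gcell k (rcons u a) (A :\ a) - gcell k u (A :\ a).

Definition bd k : chain k.+1 -> chain k :=
  fglift (fun c : cell k.+1 => \sum_(a in cset c) face k (cword c) (cset c) a *~ ksign (cset c) a).
Arguments bd : clear implicits.

HB.instance Definition _ k :=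
  GRing.isZmodMorphism.Build (chain k.+1) (chain k) (bd k) (lift_is_additive _).

Lemma bd_gcell k u A : bd k (gcell k.+1 u A) =
  if kclique k.+1 A then \sum_(a in A) face k u A a *~ ksign A a else 0.
Proof.
have [/(gcellP u)[c [-> Ec <-]] | /(gcell_eq0 u) ->] := boolP (kclique k.+1 A); last first.
  exact: raddf0.
have nfu := teq_sym (teq_nf I u).
rewrite /bd liftU scale1r; apply: eq_bigr => a _.
by rewrite /face Ec (gcell_teq _ _ (teq_rcons a nfu)) (gcell_teq _ _ nfu).
Qed.

Lemma bd_cell k (c : cell k.+1) :
  bd k << c >> = \sum_(a in cset c) face k (cword c) (cset c) a *~ ksign (cset c) a.
Proof. by rewrite -gcell_cell bd_gcell cell_kclique. Qed.

Lemma act_face k w u A a : act k w (face k u A a) = face k (w ++ u) A a.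
Proof. by rewrite /face raddfB /= !act_gcell rcons_cat. Qed.

Lemma bd_hom k : is_hom (act k.+1) (act k) (bd k).
Proof.
split=> [|w]; first exact: raddfB.
apply: (freeg_ext (F := bd k \o act k.+1 w) (G := act k w \o bd k) (raddfB _) (raddfB _)) => c /=.
rewrite act_cell bd_gcell cell_kclique bd_cell raddf_sum; apply: eq_bigr => a _.
by rewrite raddfMz /= act_face.
Qed.

Local Notation augment := (@deg (cell 0)).

Lemma augment_gcell u A : augment (gcell 0 u A) = kclique 0 A.
Proof.
have [/(gcellP u)[c [-> _ _]] | /(gcell_eq0 u) ->] := boolP (kclique 0 A); last exact: deg0.
by rewrite degU.
Qed.

Lemma augment_hom : is_hom (act 0) (@triv_act S) augment.
Proof.
split=> [|w]; first exact: raddfB.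
apply: (freeg_ext (F := augment \o act 0 w) (raddfB _) (raddfB _)) => c /=.
by rewrite act_cell !augment_gcell -gcell_cell augment_gcell.
Qed.

Lemma augment_surj (z : int) : exists x : chain 0, augment x = z.
Proof. by exists (gcell 0 [::] set0 *~ z); rewrite raddfMz /= augment_gcell kclique0 intz. Qed.

(* Two letters of a clique commute, so removing them in either order gives the same
   second difference. *)
Lemma face2C k u A a b : I a b ->
  face k (rcons u a) (A :\ a) b - face k u (A :\ a) b =
  face k (rcons u b) (A :\ b) a - face k u (A :\ b) a.
Proof.
move=> Iab; rewrite /face; have -> : A :\ b :\ a = A :\ a :\ b by rewrite !setDDl setUC.
rewrite (gcell_teq _ _ (teq_swap Isym Iirr u Iab)).
by rewrite !opprB addrCA [RHS]addrCA addrAC.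
Qed.

Lemma bd_bd k x : bd k (bd k.+1 x) = 0.
Proof.
apply: (freeg_ext (F := bd k \o bd k.+1) (G := \0) (raddfB _) (raddfB _)) => c /=.
rewrite bd_cell raddf_sum; have /cliqueP cA := cell_clique c.
set t := cword c; set A := cset c.
pose F a b := (face k (rcons t a) (A :\ a) b - face k t (A :\ a) b)
              *~ (ksign A a * ksign (A :\ a) b).
transitivity (\sum_(a in A) \sum_(b in A :\ a) F a b).
  apply: eq_bigr => a aA.
  rewrite raddfMz raddfB /= !bd_gcell !(kcliqueD1 (cell_kclique c) aA) -sumrB mulrz_suml.
  by apply: eq_bigr => b _; rewrite /F -mulrzBl -mulrzA mulrC.
apply: freeg_mul2_eq0; apply: sum_antisym_mul2 => a b aA bA ab.
by rewrite /F ksign_swap // (face2C _ _ _ (cA _ _ bA aA _)) 1?eq_sym // mulrNz.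
Qed.

Lemma augment_bd x : augment (bd 0 x) = 0.
Proof.
apply: (freeg_ext (F := augment \o bd 0) (G := \0) (raddfB _) (raddfB _)) => c /=.
rewrite bd_cell raddf_sum big1 // => a aA.
by rewrite raddfMz /face raddfB /= !augment_gcell (kcliqueD1 (cell_kclique c) aA) subrr mul0rz.
Qed.

(** * Exactness *)

Lemma teq_enum_setD1 u B x : clique B -> x \in B ->
  teq (rcons u x ++ enum (B :\ x)) (u ++ enum B).
Proof.
move=> /cliqueP cB xB; rewrite cat_rcons; apply/teq_catl/(teq_clique Isym).
- by rewrite /= mem_enum !inE eqxx enum_uniq.
- exact: enum_uniq.
- by move=> y; rewrite inE !mem_enum in_setD1; case: eqVneq => [->|].
- move=> p q; rewrite !inE !mem_enum !in_setD1.
  by case/orP=> [/eqP->|/andP[_ pB]]; case/orP=> [/eqP->|/andP[_ qB]]; apply: cB.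
Qed.

Lemma teq_enum_rcons u B x : clique B -> x \in B ->
  teq (rcons (u ++ enum (B :\ x)) x) (u ++ enum B).
Proof.
move=> /cliqueP cB xB; rewrite -cats1 -catA; apply/teq_catl/(teq_clique Isym).
- by rewrite cat_uniq enum_uniq /= mem_enum !inE eqxx.
- exact: enum_uniq.
- by move=> y; rewrite mem_cat inE !mem_enum in_setD1; case: eqVneq => [->|] /=; rewrite ?xB ?orbF.
- move=> p q; rewrite !mem_cat !inE !mem_enum !in_setD1.
  by case/orP=> [/andP[_ pB]|/eqP->]; case/orP=> [/andP[_ qB]|/eqP->]; apply: cB.
Qed.

(* Cells (t, A) are matched through a chosen last letter (the pivot) of the trace tA. *)
Definition cell_trace k (c : cell k) := nf (cword c ++ enum (cset c)).

Definition weight k (c : cell k) := (size (cword c) + #|cset c|)%N.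

Definition pivot k (c : cell k) := last_letter I (cell_trace c).

Definition redundant k (c : cell k) := if pivot c is Some m then m \notin cset c else false.

Definition collapsible k (c : cell k) := if pivot c is Some m then m \in cset c else false.

Lemma weightE k (c : cell k) : weight c = (size (cword c) + k)%N.
Proof. by rewrite /weight cell_card. Qed.

Lemma redundant_or_collapsible k (c : cell k) : (0 < weight c)%N -> redundant c || collapsible c.
Proof.
rewrite /weight cardE -size_cat -(size_nf Iirr) -/(cell_trace c) /redundant /collapsible.
by case E : (pivot c) => [m|]; [case: (m \in cset c) | rewrite (last_letter_None E)].
Qed.

Lemma redundant_collapsible k (c : cell k) : redundant c -> ~~ collapsible c.
Proof. by rewrite /redundant /collapsible; case: (pivot c). Qed.

Lemma cell_trace_face k (c : cell k.+1) (b : cell k) x : x \in cset c ->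
  cword b = nf (rcons (cword c) x) -> cset b = cset c :\ x -> cell_trace b = cell_trace c.
Proof.
move=> xA Eb Ab; rewrite /cell_trace Eb Ab; apply: eq_nf.
apply: teq_trans (teq_catr _ (teq_sym (teq_nf I _))) _.
exact: teq_enum_setD1 (cell_clique c) xA.
Qed.

Lemma coeff_bd_cell k (c : cell k.+1) (b : cell k) : coeff b (bd k << c >>) != 0 ->
  exists2 x, x \in cset c &
    cset b = cset c :\ x /\ (cword b = nf (rcons (cword c) x) \/ cword b = cword c).
Proof.
rewrite bd_cell raddf_sum => nz.
have /exists_inP[x xA] :
    [exists x in cset c, coeff b (face k (cword c) (cset c) x *~ ksign (cset c) x) != 0].
  apply: contraNT nz; rewrite negb_exists_in => /forall_inP H.
  by apply/eqP; rewrite big1 // => x /H /negPn /eqP.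
rewrite raddfMz /face raddfB /= => nzx; exists x => //.
have [/coeff_gcell[-> ->]|/negPn/eqP z1] :=
  boolP (coeff b (gcell k (rcons (cword c) x) (cset c :\ x)) != 0).
  by split; [|left].
have [/coeff_gcell[-> ->]|/negPn/eqP z2] := boolP (coeff b (gcell k (cword c) (cset c :\ x)) != 0).
  by rewrite cword_nf; split; [|right].
by move: nzx; rewrite z1 z2 subrr mul0rz eqxx.
Qed.

Lemma coeff_bd_face k (c : cell k.+1) (b : cell k) m : m \in cset c ->
  cword b = nf (rcons (cword c) m) -> cset b = cset c :\ m ->
  coeff b (bd k << c >>) = ksign (cset c) m.
Proof.
move=> mA Eb Ab; rewrite bd_cell raddf_sum (bigD1 m) //= big1 ?addr0.
  rewrite raddfMz /face raddfB /= -Ab coeff_gcell_cell //.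
  have -> : coeff b (gcell k (cword c) (cset b)) = 0.
    apply/eqP; apply: contraT => /coeff_gcell[Eb' _].
    by move: (congr1 size Eb'); rewrite Eb !(size_nf Iirr) size_rcons; lia.
  by rewrite subr0 intz.
move=> x /andP[xA xm]; rewrite raddfMz /face raddfB /=.
have mAx : m \in cset c :\ x by rewrite in_setD1 eq_sym xm mA.
have z u : coeff b (gcell k u (cset c :\ x)) = 0.
  apply/eqP; apply: contraT => /coeff_gcell[_ Ab'].
  by move: mAx; rewrite -Ab' Ab in_setD1 eqxx.
by rewrite !z subrr mul0rz.
Qed.

(* A redundant cell (t, A) with pivot m is a face of (t', m |: A), where t = t' m. *)
Lemma redundant_step k (c : cell k) : redundant c ->
  exists2 c' : cell k.+1, coeff c (bd k << c' >>) ^+ 2 = 1 &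
    forall c0, coeff c0 (bd k << c' >>) != 0 ->
      [\/ c0 = c, weight c0 = weight c /\ collapsible c0 | (weight c0 < weight c)%N].
Proof.
rewrite /redundant; case Ep : (pivot c) => [m|] // mA.
have /cliqueP cA := cell_clique c; have lm := last_letter_Some Ep.
have [t' Ht'] : is_last I (cword c) m.
  apply: (is_last_catl Isym Iirr (s := enum (cset c))); last by rewrite mem_enum.
  exact: is_last_teq (teq_sym (teq_nf I _)) lm.
have Ima a : a \in cset c -> I m a.
  move=> aA; rewrite Isym; apply: (is_last_commute _ lm); last by apply: contraNneq mA => <-.
  apply: is_last_teq (teq_nf I _) _; apply: is_last_teq (teq_enum_rcons _ (cell_clique c) aA) _.
  exact: is_last_rcons.
have kB : kclique k.+1 (m |: cset c).
  rewrite /kclique cardsU1 mA cell_card eqxx andbT; apply/cliqueP => p q.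
  rewrite !in_setU1 => /predU1P[->|pA] /predU1P[->|qA]; rewrite ?eqxx // => pq.
  - exact: Ima.
  - by rewrite Isym; apply: Ima.
  - exact: cA.
have [c' [_ Ec' Ac']] := gcellP t' kB.
have mA' : m \in cset c' by rewrite Ac' setU11.
have Ec : cword c = nf (rcons (cword c') m).
  by rewrite Ec' -(cword_nf c) (eq_nf Ht') -(eq_nf (teq_rcons m (teq_nf I t'))).
have Ac : cset c = cset c' :\ m by rewrite Ac' setU1K.
exists c' => [|c0 /coeff_bd_cell[x xA [Ac0 [Ec0|Ec0]]]].
- by rewrite (coeff_bd_face mA' Ec Ac) expr2 ksign_sqr.
- have [xm|xm] := eqVneq x m.
    by constructor 1; apply: cell_inj; rewrite ?Ec0 ?Ac0 ?Ec ?Ac xm.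
  constructor 2; split.
    by rewrite !weightE Ec0 Ec !(size_nf Iirr) !size_rcons.
  rewrite /collapsible /pivot (cell_trace_face xA Ec0 Ac0) -(cell_trace_face mA' Ec Ac).
  by rewrite -/(pivot c) Ep Ac0 in_setD1 eq_sym xm mA'.
- constructor 3; rewrite !weightE Ec0 Ec (size_nf Iirr) size_rcons; lia.
Qed.

Lemma collapse_face_unique k (c c0 : cell k.+1) (b : cell k) m : pivot c = Some m ->
  m \in cset c -> cword b = nf (rcons (cword c) m) -> cset b = cset c :\ m ->
  (weight c0 <= weight c)%N -> (weight c0 = weight c -> collapsible c0) ->
  coeff b (bd k << c0 >>) != 0 -> c0 = c.
Proof.
move=> Ep mA Eb Ab wc0 col /coeff_bd_cell[x xA [Ab0 [Eb0|Eb0]]]; last first.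
  by move: wc0; rewrite !weightE -Eb0 Eb (size_nf Iirr) size_rcons; lia.
have : collapsible c0.
  apply: col; move: (congr1 size Eb0); rewrite !weightE Eb !(size_nf Iirr) !size_rcons.
  by move=> [->].
rewrite /collapsible /pivot -(cell_trace_face xA Eb0 Ab0) (cell_trace_face mA Eb Ab).
rewrite -/(pivot c) Ep => mA0.
have xm : x = m.
  apply/eqP; apply: contraT => xm; move: (in_setD1 m (cset c) m).
  by rewrite -Ab Ab0 in_setD1 eq_sym xm mA0 eqxx.
subst x; apply: cell_inj.
  rewrite -(cword_nf c0) -(cword_nf c); apply: eq_nf; apply: (@teq_rconsK _ _ m).
  by apply: nf_teq; rewrite -Eb0 Eb.
by rewrite -(setD1K mA0) -Ab0 Ab setD1K.
Qed.

Definition bounded k L (z : chain k) := forall c, coeff c z != 0 -> (weight c <= L)%N.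

Definition top_redundant k L (z : chain k) :=
  [seq c <- dom z | redundant c && (weight c == L)].

Lemma top_collapsible k L (z : chain k) c : top_redundant L z = [::] ->
  coeff c z != 0 -> weight c = L -> (0 < L)%N -> collapsible c.
Proof.
move=> E cz wc L0; have /orP[rc|//] : redundant c || collapsible c.
  by apply: redundant_or_collapsible; rewrite wc.
have : c \in top_redundant L z by rewrite mem_filter rc wc eqxx mem_dom.
by rewrite E.
Qed.

Lemma reduce_top_redundant k L (z : chain k) : bounded L z -> top_redundant L z != [::] ->
  exists y, bounded L (z - bd k y) /\
            (size (top_redundant L (z - bd k y)%R) < size (top_redundant L z))%N.
Proof.
move=> bz; case Et : (top_redundant L z) => [|c s] // _.
have : c \in top_redundant L z by rewrite Et mem_head.
rewrite mem_filter => /andP[/andP[rc /eqP wc] _].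
have [c' sq Hc'] := redundant_step rc.
pose y : chain k.+1 := << c' >> *~ (coeff c z * coeff c (bd k << c' >>)).
have Ez c0 : coeff c0 (z - bd k y) =
    coeff c0 z - coeff c0 (bd k << c' >>) * (coeff c z * coeff c (bd k << c' >>)).
  by rewrite raddfB /= !raddfMz /= -mulrzr intz mulNr.
have cz' : coeff c (z - bd k y) = 0 by rewrite Ez mulrCA -expr2 sq mulr1 subrr.
exists y; split.
  move=> c0; rewrite Ez; have [->|nz] := eqVneq (coeff c0 (bd k << c' >>)) 0.
    by rewrite mul0r subr0; apply: bz.
  by move=> _; case: (Hc' c0 nz) => [->|[-> _]|/ltnW]; rewrite ?wc.
rewrite ltnS; apply: uniq_leq_size => [|c0]; first by rewrite filter_uniq ?uniq_dom.
rewrite mem_filter mem_dom => /andP[/andP[rc0 wc0] c0z'].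
have c0c : c0 != c by apply: contraNneq c0z' => ->; rewrite cz'.
suff : c0 \in top_redundant L z by rewrite Et inE (negPf c0c).
rewrite mem_filter rc0 wc0 mem_dom; apply: contraNneq c0z' => c0z.
rewrite Ez c0z sub0r oppr_eq0 mulf_eq0; apply/orP; left; apply: contraT => nz.
case: (Hc' c0 nz) => [c0c'|[_ col]|]; first by rewrite c0c' eqxx in c0c.
  by move: (redundant_collapsible rc0); rewrite col.
by rewrite (eqP wc0) wc ltnn.
Qed.

(* Eliminating redundant cells of top weight one at a time, a cycle becomes homologous
   to one of weight 0. *)
Lemma reduce_weight k (Q : chain k -> Prop) :
  (forall z y, Q z -> Q (z - bd k y)) ->
  (forall z L, Q z -> (0 < L)%N -> bounded L z -> top_redundant L z = [::] -> bounded L.-1 z) ->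
  forall z, Q z -> exists y, bounded 0 (z - bd k y).
Proof.
move=> HQ Hstep.
suff H L z : Q z -> bounded L z -> exists y, bounded 0 (z - bd k y).
  move=> z Qz; apply: (H (\max_(c <- dom z) weight c)) => // c cz.
  by apply: leq_bigmax_seq => //; rewrite mem_dom.
elim: L z => [|L IHL] z Qz bz; first by exists 0; rewrite raddf0 subr0.
have [N szN] := ubnP (size (top_redundant L.+1 z)).
elim: N z Qz bz szN => // N IHN z Qz bz szN.
have [E|ne] := eqVneq (top_redundant L.+1 z) [::]; first exact: IHL z Qz (Hstep z L.+1 Qz isT bz E).
have [y [by' lt]] := reduce_top_redundant bz ne.
have [y' Hy'] := IHN (z - bd k y) (HQ z y Qz) by' (leq_trans lt szN).
by exists (y + y'); rewrite raddfD opprD addrA.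
Qed.

(* A collapsible cell of top weight is the only one whose boundary meets its collapse face. *)
Lemma collapsible_step k (z : chain k.+1) L : bd k z = 0 -> (0 < L)%N -> bounded L z ->
  top_redundant L z = [::] -> bounded L.-1 z.
Proof.
move=> dz L0 bz nored c cz; rewrite -ltnS prednK // ltn_neqAle bz // andbT.
apply/eqP => wc; have := top_collapsible nored cz wc L0.
rewrite /collapsible; case Ep : (pivot c) => [m|] // mA.
have [b [_ Eb Ab]] := gcellP (rcons (cword c) m) (kcliqueD1 (cell_kclique c) mA).
have uniq_c c0 : coeff c0 z != 0 -> coeff b (bd k << c0 >>) != 0 -> c0 = c.
  move=> c0z; apply: collapse_face_unique Ep mA Eb Ab _ _; first by rewrite wc bz.
  by move=> wc0; apply: top_collapsible nored c0z _ L0; rewrite wc0.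
move/eqP: (congr1 (coeff b) dz); apply/negP.
rewrite coeff_additive (bigD1_seq c) ?uniq_dom ?mem_dom //= (coeff_bd_face mA Eb Ab).
rewrite big_seq_cond big1 ?addr0 ?coeff0 ?mulf_neq0 ?ksign_neq0 //.
move=> c0 /andP[c0z c0c]; rewrite mem_dom in c0z.
have [->|nz] := eqVneq (coeff b (bd k << c0 >>)) 0; first by rewrite mul0r.
by rewrite (uniq_c c0 c0z nz) eqxx in c0c.
Qed.

Lemma bd_exact k (z : chain k.+1) : bd k z = 0 -> exists y, bd k.+1 y = z.
Proof.
move=> dz; have [||y Hy] := reduce_weight (Q := fun x : chain k.+1 => bd k x = 0) _ _ dz.
- by move=> w y Qw; rewrite raddfB /= Qw bd_bd subrr.
- by move=> w L; apply: collapsible_step.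
exists y; apply/eqP; rewrite eq_sym -subr_eq0; apply/freeg_eqP => c.
by rewrite coeff0; apply/eqP; apply: contraT => /Hy; rewrite weightE addnS.
Qed.

Lemma augment_exact (z : chain 0) : augment z = 0 -> exists y, bd 0 y = z.
Proof.
move=> ez; have [||y Hy] := reduce_weight (Q := fun x : chain 0 => augment x = 0) _ _ ez.
- by move=> w y Qw; rewrite raddfB /= Qw augment_bd subrr.
- move=> w L _ L0 bw nored c cw; rewrite -ltnS prednK // ltn_neqAle bw // andbT.
  apply/eqP => wc; move: (top_collapsible nored cw wc L0).
  by rewrite /collapsible; case: (pivot c) => // m; rewrite (cards0_eq (cell_card c)) inE.
have [e [_ Ee Ae]] := gcellP [::] kclique0.
set w := z - bd 0 y.
have cell0 c : coeff c w != 0 -> c = e.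
  move=> /Hy; rewrite weightE leqn0 addn0 size_eq0 => /eqP wc.
  by apply: cell_inj; rewrite ?Ee ?(nf_nil Iirr) ?Ae // (cards0_eq (cell_card c)).
have Ew : w = << e >> *~ coeff e w.
  apply/eqP/freeg_eqP => c; rewrite raddfMz /= coeffU mul1r.
  have [<-|ne] := eqVneq e c; first by rewrite intz.
  by rewrite mul0rz; apply/eqP; apply: contraT => /cell0 ce; rewrite ce eqxx in ne.
have : augment w = 0 by rewrite raddfB /= ez augment_bd subrr.
rewrite {1}Ew raddfMz /= degU intz => /eqP cw0.
by exists y; apply/eqP; rewrite eq_sym -subr_eq0 -/w Ew (eqP cw0) mulr0z.
Qed.

Lemma chain_eq0 n j (z : chain j) :
  (forall C : {set S}, {in C &, forall a b, a != b -> I a b} -> (#|C| <= n)%N) ->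
  (n < j)%N -> z = 0.
Proof.
move=> Hcl nj; apply/eqP/freeg_eqP => c; rewrite coeff0.
have /cliqueP/Hcl := cell_clique c; rewrite cell_card; lia.
Qed.

End KoszulComplex.

Theorem corollary2p4 (S : finType) (I : rel S)
  (Isym : symmetric I) (Iirr : irreflexive I) (n : nat) (hn : (1 <= n)%N) :
  (forall C : {set S}, {in C &, forall a b, a != b -> I a b} -> (#|C| <= n)%N) ->
  hom_dim_le I n.
Proof.
move=> Hcl; exists (fun k => chain I k : zmodType), (@act S I), (@bd S I), (@deg (cell I 0)).
split.
- by move=> k _; split; [apply: act_module | apply: act_projective].
- by move=> k _; apply: bd_hom.
- by split; [apply: augment_hom | apply: augment_surj].
- split=> [_ x|k _ x]; split.
  + exact: augment_exact.
  + by case=> y <-; apply: augment_bd.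
  + exact: bd_exact.
  + by case=> y <-; apply: bd_bd.
- split=> [x n0|k nk x /(bd_exact Isym Iirr)[y <-]]; first by rewrite n0 in hn.
  by rewrite (chain_eq0 y Hcl (_ : (n < k.+2)%N)) ?raddf0 // -nk.
Qed.
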